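(* Let $p$ be an odd prime, $\alpha_r=\frac{(1/2)_r}{r!}$ for $r\ge0$ (where $(x)_r=x(x+1)\cdots(x+r-1)$), and $\gamma=(4^{p-1}-1)/p$. Let $r,r',t$ be integers $\ge0$ with $r=pr'+t$ and $t<p$. If $t>p/2$, then $p$ divides $\alpha_r$. If $t<p/2$, then $$\alpha_r\equiv\alpha_{r'}\alpha_t\left(1-\gamma p r'+2pr'\sum_{j=1}^{2t}\frac{(-1)^{j-1}}{j}\right)\pmod{p^2}.$$
   Context: Divisibility and congruences are in the ring $\mathbb{Z}_{(p)}$ of $p$-integral rationals. *)

From HB Require Import structures.
From mathcomp Require Import all_boot all_order all_algebra.
Set Implicit Arguments. Unset Strict Implicit. Unset Printing Implicit Defensive.
Import Order.TTheory GRing.Theory Num.Theory.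
Local Open Scope ring_scope.

(* x is p-integral: x lies in Z_(p), i.e. p does not divide the denominator *)
Definition pintegral (p : nat) (x : rat) : bool := ~~ (p %| `|denq x|)%N.

Definition pdvdq (p k : nat) (x : rat) : bool :=
  pintegral p (x / (p%:R ^+ k)).

Definition pcongr (p k : nat) (x y : rat) : bool := pdvdq p k (x - y).

Definition poch (x : rat) (r : nat) : rat := \prod_(i < r) (x + i%:R).

Definition alpha (r : nat) : rat := poch (1 / 2) r / (r`!)%:R.

Definition gammap (p : nat) : rat := ((4 : rat) ^+ (p.-1) - 1) / p%:R.

(* Write alpha_(n+1) = alpha_n (n + 1/2)/(n + 1) and h = (p - 1)/2.  Over a full block
   pm <= n < p(m + 1) the product of these ratios is (m + 1/2)/(m + 1) times a factor B_m
   whose numerator and denominator pair the remaining factors symmetrically about the middle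
   of the block: (pm + c)(p(m + 1) - c) = c(p - c) + p^2 m(m + 1).  Hence B_m = B_0 = 2 alpha_p
   (mod p^2), and Babbage's congruence C(2p, p) = 2 (mod p^2) gives 2 alpha_p = 4^(1-p)
   = 1 - gamma p, so that alpha_(pm) = alpha_m (1 - gamma p m) (mod p^2).  Of the last t ratios
   at pm + i, i < t, the one at i = h has numerator p(m + 1/2) when t > p/2; when 2t < p each
   is congruent to the ratio at i times 1 + 2pm (1/(2i+1) - 1/(2i+2)), and these corrections
   add up to the alternating harmonic sum. *)

From HB Require Import structures.
From mathcomp Require Import all_boot all_order all_algebra.
From mathcomp Require Import cyclic.
From mathcomp Require Import ring lra zify.
Set Implicit Arguments. Unset Strict Implicit. Unset Printing Implicit Defensive.
Import Order.TTheory GRing.Theory Num.Theory.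
Local Open Scope ring_scope.

Lemma denq_frac_dvd (a : int) (b : nat) : (`|denq (a%:~R / b%:R)| %| b)%N.
Proof.
have -> : a%:~R / b%:R = fracq (a, b%:Z) by rewrite fracqE.
rewrite den_fracq /=; case: b => [|b] //=; exact: dvdn_div (dvdn_gcdr _ _).
Qed.

Lemma big_ord_pairs (R : Type) (idx : R) (op : Monoid.com_law idx) n (F : nat -> R) :
  \big[op/idx]_(i < n.*2) F i = \big[op/idx]_(i < n) op (F i) (F (n.*2 - i.+1)%N).
Proof.
rewrite -addnn big_split_ord /= big_split /=; congr (op _ _).
rewrite (reindex_inj (@rev_ord_inj n)) /=.
by apply: eq_bigr => i _; rewrite addnBA.
Qed.

Lemma big_ord_pairs_mid (R : Type) (idx : R) (op : Monoid.com_law idx) n (F : nat -> R) :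
  \big[op/idx]_(i < n.*2.+1) F i =
  op (\big[op/idx]_(i < n) op (F i) (F (n.*2 - i)%N)) (F n).
Proof.
rewrite -addnn -addnS big_split_ord /= big_ord_recl /= addn0 big_split /=.
rewrite -Monoid.mulmA [op (F n) _]Monoid.mulmC; congr (op _ (op _ _)).
rewrite (reindex_inj (@rev_ord_inj n)) /=.
by apply: eq_bigr => i _; rewrite /bump leq0n add1n subnSK // addnBA // ltnW.
Qed.

Definition alpha_ratio (n : nat) : rat := (n%:R + 1/2) / n.+1%:R.

Lemma alpha0 : alpha 0 = 1.
Proof. by rewrite /alpha /poch big_ord0 fact0 divr1. Qed.

Lemma alphaS n : alpha n.+1 = alpha n * alpha_ratio n.
Proof.
by rewrite /alpha /poch /alpha_ratio big_ord_recr /= factS natrM invfM; ring.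
Qed.

Lemma alphaD m n : alpha (m + n) = alpha m * \prod_(i < n) alpha_ratio (m + i).
Proof.
elim: n => [|n IHn]; first by rewrite addn0 big_ord0 mulr1.
by rewrite addnS alphaS IHn big_ord_recr /= mulrA.
Qed.

Lemma alpha_central_binomial n : alpha n * 4 ^+ n = 'C(n.*2, n)%:R.
Proof.
elim: n => [|n IHn]; first by rewrite alpha0 mulr1 bin0.
have bin_double_succ : (n.+1 * 'C(n.+1.*2, n.+1) = 2 * n.*2.+1 * 'C(n.*2, n))%N.
  have := mul_bin_diag n.+1.*2 n; have := mul_bin_down n.*2.+1 n.
  rewrite doubleS /=; nia.
have -> : 'C(n.+1.*2, n.+1)%:R = 2 * (2 * n%:R + 1) * 'C(n.*2, n)%:R / n.+1%:R :> rat.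
  have -> : 2 * (2 * n%:R + 1) = (2 * n.*2.+1)%N%:R :> rat.
    by rewrite natrM -[n.*2.+1]addn1 natrD -mul2n natrM.
  by rewrite -natrM -bin_double_succ natrM mulrC mulKf ?pnatr_eq0.
by rewrite alphaS exprS -IHn /alpha_ratio; field; rewrite addrC natr1 pnatr_eq0.
Qed.

Lemma sum_alternating_harmonic (R : unitRingType) n :
  \sum_(1 <= j < (2 * n).+1) (-1) ^+ j.-1 / j%:R =
  \sum_(i < n) ((i.*2.+1)%:R^-1 - (i.*2.+2)%:R^-1) :> R.
Proof.
rewrite mul2n; elim: n => [|n IHn]; first by rewrite big_ord0 big_geq.
rewrite big_ord_recr /= -IHn doubleS 2?big_nat_recr //=.
have even : (-1) ^+ n.*2 = 1 :> R by rewrite -signr_odd odd_double.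
by rewrite exprS even mulr1 mul1r mulN1r addrA.
Qed.

Lemma ndvdn_lt p j : (0 < j < p)%N -> ~~ (p %| j)%N.
Proof. by case/andP=> j_gt0 j_lt_p; apply/negP => /(dvdn_leq j_gt0); rewrite leqNgt j_lt_p. Qed.

Lemma ndvdn_mulD p m j : (0 < j < p)%N -> ~~ (p %| p * m + j)%N.
Proof. by move=> j_range; rewrite dvdn_addr ?dvdn_mulr ?ndvdn_lt. Qed.

Section PIntegral.
Variable p : nat.
Hypothesis p_prime : prime p.
Local Notation P := (p%:R : rat).

Lemma ndvd_natr_neq0 b : ~~ (p %| b)%N -> b%:R != 0 :> rat.
Proof. by rewrite pnatr_eq0; apply: contraNneq => ->. Qed.

Lemma pintegral_frac (a : int) (b : nat) : ~~ (p %| b)%N -> a%:~R / b%:R \in pintegral p.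
Proof. by apply: contra => /dvdn_trans; apply; apply: denq_frac_dvd. Qed.

Lemma pintegralP x : reflect (exists a : int, exists2 b : nat, ~~ (p %| b)%N & x = a%:~R / b%:R)
                             (x \in pintegral p).
Proof.
apply: (iffP idP) => [xZ | [a [b pb ->]]]; last exact: pintegral_frac.
exists (numq x), `|denq x|%N => //.
by rewrite -[LHS]divq_num_den -absz_denq.
Qed.

Lemma pintegral_subring_closed : GRing.subring_closed (pintegral p).
Proof.
have ndvdM b d : ~~ (p %| b)%N -> ~~ (p %| d)%N -> ~~ (p %| b * d)%N.
  by move=> pb pd; rewrite Euclid_dvdM // negb_or pb.
split.
- by have := @pintegral_frac 1 1; rewrite Euclid_dvd1 // divr1; apply.
- move=> _ _ /pintegralP[a [b pb ->]] /pintegralP[c [d pd ->]].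
  apply/pintegralP; exists (a * d%:Z - c * b%:Z); exists (b * d)%N; first exact: ndvdM.
  by rewrite rmorphB !rmorphM /= !pmulrn; field; rewrite !ndvd_natr_neq0.
- move=> _ _ /pintegralP[a [b pb ->]] /pintegralP[c [d pd ->]].
  apply/pintegralP; exists (a * c); exists (b * d)%N; first exact: ndvdM.
  by rewrite !rmorphM /=; field; rewrite !ndvd_natr_neq0.
Qed.

HB.instance Definition _ :=
  GRing.isSubringClosed.Build rat (pintegral p) pintegral_subring_closed.

Lemma pintegralV_nat n : ~~ (p %| n)%N -> n%:R^-1 \in pintegral p.
Proof. by rewrite -div1r; apply: (pintegral_frac 1). Qed.

Lemma natr_p_neq0 : P != 0.
Proof. by rewrite pnatr_eq0 -lt0n prime_gt0. Qed.

Lemma pdvdq_zmod_closed k : GRing.zmod_closed (pdvdq p k).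
Proof.
split=> [|x y]; rewrite -!topredE /= /pdvdq; first by rewrite mul0r; exact: rpred0.
by rewrite mulrBl; exact: rpredB.
Qed.

HB.instance Definition _ k := GRing.isZmodClosed.Build rat (pdvdq p k) (pdvdq_zmod_closed k).

Lemma pdvdqP k x : reflect (exists2 y, y \in pintegral p & x = P ^+ k * y) (pdvdq p k x).
Proof.
have Pk0 : P ^+ k != 0 by rewrite expf_neq0 // natr_p_neq0.
apply: (iffP idP) => [xk | [y yZ ->]]; last by rewrite /pdvdq [_ * y]mulrC mulfK.
by exists (x / P ^+ k) => //; rewrite mulrC divfK.
Qed.

Lemma pdvdq_exp k y : y \in pintegral p -> pdvdq p k (P ^+ k * y).
Proof. by move=> yZ; apply/pdvdqP; exists y. Qed.

Lemma pdvdq_mull k a x : a \in pintegral p -> pdvdq p k x -> pdvdq p k (a * x).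
Proof. by move=> aZ xk; rewrite /pdvdq -mulrA; exact: rpredM. Qed.

Lemma pdvdq_mulr k a x : a \in pintegral p -> pdvdq p k x -> pdvdq p k (x * a).
Proof. by rewrite mulrC; apply: pdvdq_mull. Qed.

Lemma pcongrxx k x : pcongr p k x x.
Proof. by rewrite /pcongr subrr; exact: rpred0. Qed.

Lemma pcongr_trans k y x z : pcongr p k x y -> pcongr p k y z -> pcongr p k x z.
Proof. by move=> xy yz; rewrite /pcongr -(subrKA y); exact: rpredD. Qed.

Lemma pcongrM k x x' y y' : x \in pintegral p -> y' \in pintegral p ->
  pcongr p k x x' -> pcongr p k y y' -> pcongr p k (x * y) (x' * y').
Proof.
move=> xZ y'Z xx' yy'; rewrite /pcongr.
have -> : x * y - x' * y' = x * (y - y') + (x - x') * y' by ring.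
by apply: rpredD; [apply: pdvdq_mull | apply: pdvdq_mulr].
Qed.

Lemma pcongrV_nat k m n : ~~ (p %| m)%N -> ~~ (p %| n)%N ->
  pcongr p k m%:R n%:R -> pcongr p k m%:R^-1 n%:R^-1.
Proof.
move=> pm pn mn; rewrite /pcongr.
have -> : m%:R^-1 - n%:R^-1 = - (m%:R - n%:R) * m%:R^-1 * n%:R^-1 :> rat.
  by field; rewrite !ndvd_natr_neq0.
apply: pdvdq_mulr; first exact: pintegralV_nat.
apply: pdvdq_mulr; first exact: pintegralV_nat.
exact: rpredNr.
Qed.

Lemma pcongr_prod (I : finType) k (a b : I -> rat) :
  (forall i, [/\ a i \in pintegral p, b i \in pintegral p & pcongr p k (a i) (b i)]) ->
  pcongr p k (\prod_i a i) (\prod_i b i).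
Proof.
move=> ab; pose K x y := [/\ x \in pintegral p, y \in pintegral p & pcongr p k x y].
suff [] : K (\prod_i a i) (\prod_i b i) by [].
apply: big_rec2 => [|i x y _ [xZ yZ xy]]; first by split; rewrite ?rpred1 ?pcongrxx.
have [aZ bZ ab_i] := ab i.
by split; rewrite ?rpredM // pcongrM.
Qed.

Lemma pcongr_prod1D (I : finType) (x : I -> rat) : (forall i, x i \in pintegral p) ->
  pcongr p 2 (\prod_i (1 + P * x i)) (1 + P * \sum_i x i).
Proof.
move=> xZ; pose K u v := v \in pintegral p /\ pcongr p 2 u (1 + P * v).
suff [] : K (\prod_i (1 + P * x i)) (\sum_i x i) by [].
apply: big_rec2 => [|i u v _ [vZ uv]]; first by rewrite /K mulr0 addr0 rpred0 pcongrxx.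
split; first by rewrite rpredD.
rewrite /pcongr.
have -> : (1 + P * x i) * u - (1 + P * (x i + v)) =
          (1 + P * x i) * (u - (1 + P * v)) + P ^+ 2 * (x i * v) by ring.
apply: rpredD; last exact/pdvdq_exp/rpredM.
by apply: pdvdq_mull; rewrite // rpredD ?rpred1 ?rpredM ?rpred_nat.
Qed.

Section OddPrime.
Hypothesis p_odd : odd p.
Local Notation h := p./2.

Lemma p_double_half : p = h.*2.+1.
Proof. by rewrite -[p in LHS]odd_double_half p_odd. Qed.

Lemma natr_p_double_half : P = 2 * h%:R + 1.
Proof. by rewrite [p in LHS]p_double_half -muln2 -addn1 natrD natrM mulrC. Qed.

Lemma big_ord_p (R : Type) (idx : R) (op : R -> R -> R) (F : nat -> R) :
  \big[op/idx]_(i < p) F i = \big[op/idx]_(i < h.*2.+1) F i.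
Proof. by rewrite -p_double_half. Qed.

Lemma big_ord_p_mid (R : Type) (idx : R) (op : Monoid.com_law idx) (F : nat -> R) :
  \big[op/idx]_(i < p) F i = op (\big[op/idx]_(i < h) op (F i) (F (h.*2 - i)%N)) (F h).
Proof. by rewrite (@big_ord_p R idx op F) (big_ord_pairs_mid op h F). Qed.

Lemma big_ord_p_last (R : Type) (idx : R) (op : Monoid.com_law idx) (F : nat -> R) :
  \big[op/idx]_(i < p) F i = op (\big[op/idx]_(i < h) op (F i) (F (h.*2 - i.+1)%N)) (F h.*2).
Proof. by rewrite (@big_ord_p R idx op F) big_ord_recr (big_ord_pairs op h F). Qed.

Lemma ndvd2 : ~~ (p %| 2)%N.
Proof. by rewrite ndvdn_lt // odd_prime_gt2. Qed.

Lemma half_pintegral : 1 / 2 \in pintegral p.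
Proof. exact: (pintegral_frac 1 ndvd2). Qed.

Lemma ndvd_exp4 k : ~~ (p %| 4 ^ k)%N.
Proof. by rewrite Euclid_dvdX // (Euclid_dvdM 2 2) // orbb negb_and ndvd2. Qed.

Lemma alpha_pintegral n : alpha n \in pintegral p.
Proof.
have -> : alpha n = 'C(n.*2, n)%:R * (4 ^ n)%N%:R^-1.
  by rewrite -alpha_central_binomial natrX mulfK // expf_neq0.
by rewrite rpredM ?rpred_nat ?pintegralV_nat ?ndvd_exp4.
Qed.

Lemma alpha_ratio_pintegral n : ~~ (p %| n.+1)%N -> alpha_ratio n \in pintegral p.
Proof. by move=> pn; rewrite rpredM ?rpredD ?rpred_nat ?half_pintegral ?pintegralV_nat. Qed.

Lemma gammap_pintegral : gammap p \in pintegral p.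
Proof.
have /eqP : (4 ^ p.-1 = 1 %[mod p])%N.
  rewrite -(totient_prime p_prime) Euler_exp_totient // coprime_sym prime_coprime //.
  exact: (ndvd_exp4 1).
rewrite eqn_mod_dvd ?expn_gt0 // => /dvdnP[c c_def].
have -> : gammap p = c%:R.
  rewrite /gammap -[1]/(1%N%:R) -natrX -natrB ?expn_gt0 // c_def natrM mulfK //.
  exact: natr_p_neq0.
exact: rpred_nat.
Qed.

Lemma exp4_gammap : 4 ^+ p.-1 = 1 + gammap p * P.
Proof. by rewrite /gammap divfK ?natr_p_neq0 // addrC subrK. Qed.

Definition block_pairs (c : nat -> rat) (m : nat) : rat :=
  \prod_(i < h) ((P * m%:R + c i) * (P * m.+1%:R - c i)).

(* Kept in [nat], where it is visibly prime to [p]. *)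
Definition block_den (m : nat) : nat := \prod_(i < h) ((p * m + i.+1) * (p * m.+1 - i.+1)).

Definition block_ratio (m : nat) : rat :=
  block_pairs (fun i => i%:R + 1 / 2) m / (block_den m)%:R.

Lemma block_pairs_pintegral c m : (forall i, c i \in pintegral p) ->
  block_pairs c m \in pintegral p.
Proof.
move=> cZ; apply: rpred_prod => i _.
by rewrite rpredM ?rpredD ?rpredB ?rpredM ?rpred_nat ?rpredN ?cZ.
Qed.

Lemma block_pairs_pcongr c m : (forall i, c i \in pintegral p) ->
  pcongr p 2 (block_pairs c m) (block_pairs c 0).
Proof.
move=> cZ; apply: pcongr_prod => i.
have pairZ n : (P * n%:R + c i) * (P * n.+1%:R - c i) \in pintegral p.
  by rewrite rpredM ?rpredD ?rpredB ?rpredM ?rpred_nat ?rpredN ?cZ.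
split=> //; rewrite /pcongr.
have -> : (P * m%:R + c i) * (P * m.+1%:R - c i) - (P * 0%:R + c i) * (P * 1%:R - c i) =
          P ^+ 2 * (m * m.+1)%N%:R by rewrite natrM -natr1; ring.
exact/pdvdq_exp/rpred_nat.
Qed.

Lemma block_den_pairs m : (block_den m)%:R = block_pairs (fun i => i.+1%:R) m.
Proof.
rewrite natr_prod; apply: eq_bigr => i _.
have i_lt : (i.+1 <= p * m.+1)%N by have := ltn_ord i; have := p_double_half; nia.
by rewrite natrM natrD natrB // !natrM.
Qed.

Lemma block_den_ndvd m : ~~ (p %| block_den m)%N.
Proof.
rewrite /block_den; elim/big_ind: _ => [|a b|i _]; first by rewrite Euclid_dvd1.
  by rewrite Euclid_dvdM // negb_or => -> ->.
have i_lt := ltn_ord i; have := p_double_half => p_def.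
have -> : (p * m.+1 - i.+1 = p * m + (p - i.+1))%N by nia.
by rewrite Euclid_dvdM // negb_or !ndvdn_mulD //; apply/andP; split; lia.
Qed.

Lemma block_ratio_pintegral m : block_ratio m \in pintegral p.
Proof.
rewrite rpredM ?pintegralV_nat ?block_den_ndvd ?block_pairs_pintegral // => i.
by rewrite rpredD ?rpred_nat ?half_pintegral.
Qed.

Lemma block_ratio_pcongr m : pcongr p 2 (block_ratio m) (block_ratio 0).
Proof.
have halfZ i : i%:R + 1 / 2 \in pintegral p by rewrite rpredD ?rpred_nat ?half_pintegral.
apply: pcongrM; rewrite ?block_pairs_pintegral ?pintegralV_nat ?block_den_ndvd //.
  exact: block_pairs_pcongr.
apply: pcongrV_nat; rewrite ?block_den_ndvd // !block_den_pairs.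
by apply: block_pairs_pcongr => i; apply: rpred_nat.
Qed.

Lemma prod_alpha_ratio_p m :
  \prod_(i < p) alpha_ratio (p * m + i) = alpha_ratio m * block_ratio m.
Proof.
have num : \prod_(i < p) ((p * m + i)%:R + 1 / 2) =
           block_pairs (fun i => i%:R + 1 / 2) m * (P * (m%:R + 1 / 2)).
  rewrite (big_ord_p_mid _ (fun i => (p * m + i)%:R + 1 / 2)) /=; congr (_ * _).
    apply: eq_bigr => i _; have i_le : (i <= h.*2)%N by have := ltn_ord i; lia.
    by rewrite !natrD !natrM natrB // -muln2 natrM -natr1 natr_p_double_half; field.
  by rewrite natrD natrM natr_p_double_half; field.
have den : \prod_(i < p) (p * m + i).+1%:R = (block_den m)%:R * (P * m.+1%:R).
  rewrite (big_ord_p_last _ (fun i => (p * m + i).+1%:R)) /= block_den_pairs; congr (_ * _).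
    apply: eq_bigr => i _; have i_lt : (i < h.*2)%N by have := ltn_ord i; lia.
    by rewrite -!natr1 !natrD !natrM natrB // -muln2 natrM natr_p_double_half; field.
  by rewrite -!natr1 natrD natrM -muln2 natrM natr_p_double_half; field.
rewrite /alpha_ratio /block_ratio prodf_div num den; field.
by rewrite natr_p_neq0 ndvd_natr_neq0 ?block_den_ndvd // addrC natr1 pnatr_eq0.
Qed.

Lemma block_ratio0 : block_ratio 0 = 2 * alpha p.
Proof.
have := prod_alpha_ratio_p 0; have := alphaD 0 p.
rewrite muln0 alpha0 mul1r !add0n => <- ->.
by rewrite /alpha_ratio; field.
Qed.

Lemma alpha_mulp m : alpha (p * m) = alpha m * \prod_(k < m) block_ratio k.
Proof.
elim: m => [|m IHm]; first by rewrite muln0 alpha0 big_ord0 mulr1.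
rewrite mulnS addnC alphaD IHm prod_alpha_ratio_p alphaS big_ord_recr /=.
by rewrite mulrACA.
Qed.

(* H_(p-1) summed backwards; the terms at j and p - 2 - j add up to p/((j + 1)(p - j - 1)). *)
Lemma harmonic_pdvdq : pdvdq p 1 (\sum_(j < h.*2) (p - j.+1)%:R^-1).
Proof.
rewrite (big_ord_pairs _ h (fun j => (p - j.+1)%:R^-1)) /=.
have pair j : (j < h)%N -> (p - j.+1)%:R^-1 + (p - (h.*2 - j.+1).+1)%:R^-1 =
                           P * ((p - j.+1) * j.+1)%N%:R^-1 :> rat.
  move=> j_lt; have := p_double_half => p_def.
  have -> : (p - (h.*2 - j.+1).+1 = j.+1)%N by lia.
  have {2}-> : p = (p - j.+1 + j.+1)%N by lia.
  have k_neq0 : (p - j.+1)%:R != 0 :> rat by rewrite pnatr_eq0 subn_eq0 -ltnNge; lia.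
  by rewrite natrD natrM; field; rewrite addrC natr1 pnatr_eq0 k_neq0.
rewrite (eq_bigr _ (fun (j : 'I_h) _ => pair j (ltn_ord j))) -mulr_sumr -[P]expr1.
apply: pdvdq_exp.
apply: rpred_sum => j _; apply: pintegralV_nat.
have j_lt := ltn_ord j; have := p_double_half => p_def.
by rewrite Euclid_dvdM // negb_or !ndvdn_lt //; apply/andP; split; lia.
Qed.

Lemma binomial_2p_prod :
  'C(p.*2, p)%:R = 2 * \prod_(j < h.*2) (1 + P * (p - j.+1)%:R^-1) :> rat.
Proof.
have fact_neq0 : p`!%:R != 0 :> rat by rewrite pnatr_eq0 -lt0n fact_gt0.
rewrite -[LHS](mulfK fact_neq0) -natrM bin_ffact -ffactnn !ffact_prod !natr_prod -prodf_div.
rewrite (big_ord_p _ _ (fun i => (p.*2 - i)%:R / (p - i)%:R)) big_ord_recl /=.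
rewrite !subn0 -mul2n natrM mulfK ?natr_p_neq0 //; congr (_ * _).
apply: eq_bigr => j _; rewrite /bump add1n.
have j_lt := ltn_ord j; have := p_double_half => p_def.
have -> : (2 * p - j.+1 = p + (p - j.+1))%N by lia.
have k_neq0 : (p - j.+1)%:R != 0 :> rat by rewrite pnatr_eq0 subn_eq0 -ltnNge; lia.
by rewrite natrD; field.
Qed.

Lemma Babbage : pcongr p 2 'C(p.*2, p)%:R 2.
Proof.
have /pdvdqP[y yZ harm_def] := harmonic_pdvdq.
set H := \sum_(j < h.*2) _ in harm_def.
have HZ : H \in pintegral p by rewrite harm_def rpredM ?rpredX ?rpred_nat.
rewrite binomial_2p_prod; apply: (pcongr_trans (y := 2 * (1 + P * H))).
  apply: pcongrM; rewrite ?rpred_nat ?rpredD ?rpred1 ?rpredM ?rpred_nat ?pcongrxx //.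
  apply: pcongr_prod1D => j; have := ltn_ord j; have := p_double_half => p_def j_lt.
  by apply: pintegralV_nat; rewrite ndvdn_lt //; lia.
rewrite /pcongr harm_def.
have -> : 2 * (1 + P * (P ^+ 1 * y)) - 2 = P ^+ 2 * (2 * y) by ring.
by apply: pdvdq_exp; rewrite rpredM ?rpred_nat.
Qed.

Lemma two_alpha_p_pcongr : pcongr p 2 (2 * alpha p) (1 - gammap p * P).
Proof.
have four_neq0 : (4 : rat) ^+ p.-1 != 0 by rewrite expf_neq0.
have unitZ : (2 * 4 ^ p.-1)%N%:R^-1 \in pintegral p.
  by rewrite pintegralV_nat // Euclid_dvdM // negb_or ndvd2 ndvd_exp4.
have -> : 2 * alpha p = 'C(p.*2, p)%:R * (2 * 4 ^ p.-1)%N%:R^-1.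
  rewrite -alpha_central_binomial natrM natrX -[in 4 ^+ p](prednK (prime_gt0 p_prime)).
  by rewrite exprS; field.
apply: (pcongr_trans (y := 2 * (2 * 4 ^ p.-1)%N%:R^-1)).
  by apply: pcongrM; rewrite ?rpred_nat ?Babbage ?pcongrxx.
rewrite /pcongr natrM natrX.
have -> : 2 * (2 * 4 ^+ p.-1)^-1 - (1 - gammap p * P) =
          P ^+ 2 * (gammap p ^+ 2 * (4 ^+ p.-1)^-1).
  by move: four_neq0; rewrite exp4_gammap => ?; field.
apply/pdvdq_exp/rpredM; first by rewrite rpredX ?gammap_pintegral.
by rewrite -natrX pintegralV_nat ?ndvd_exp4.
Qed.

Lemma prod_block_ratio_pcongr m :
  pcongr p 2 (\prod_(k < m) block_ratio k) (1 - gammap p * P * m%:R).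
Proof.
have gammaZ : - gammap p \in pintegral p by rewrite rpredN gammap_pintegral.
apply: (pcongr_trans (y := \prod_(k < m) (1 + P * - gammap p))).
  apply: pcongr_prod => k; split; first exact: block_ratio_pintegral.
    by rewrite rpredD ?rpred1 ?rpredM ?rpred_nat.
  apply: pcongr_trans (block_ratio_pcongr k) _.
  by rewrite block_ratio0 mulrN [P * _]mulrC; exact: two_alpha_p_pcongr.
apply: pcongr_trans (pcongr_prod1D _) _ => //.
have -> : 1 + P * \sum_(k < m) - gammap p = 1 - gammap p * P * m%:R.
  by rewrite sumr_const card_ord -mulr_natr; ring.
exact: pcongrxx.
Qed.

Lemma prod_alpha_ratio_pdvdq m t : (h < t < p)%N ->
  pdvdq p 1 (\prod_(i < t) alpha_ratio (p * m + i)).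
Proof.
case/andP=> h_lt_t t_lt_p; rewrite (bigD1 (Ordinal h_lt_t)) //=.
apply: pdvdq_mulr.
  apply: rpred_prod => i _; apply: alpha_ratio_pintegral; rewrite -addnS ndvdn_mulD //.
  exact: leq_ltn_trans (ltn_ord i) t_lt_p.
have centre : (p * m + h)%:R + 1 / 2 = P * (m%:R + 1 / 2).
  by rewrite natrD natrM natr_p_double_half; field.
have -> : alpha_ratio (p * m + h) = P ^+ 1 * ((m%:R + 1 / 2) * (p * m + h.+1)%N%:R^-1).
  by rewrite /alpha_ratio centre addnS expr1 mulrA.
apply/pdvdq_exp/rpredM; first by rewrite rpredD ?rpred_nat ?half_pintegral.
by rewrite pintegralV_nat // ndvdn_mulD //= (leq_ltn_trans h_lt_t t_lt_p).
Qed.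

Lemma alpha_ratio_pcongr m i : (i.*2.+2 < p)%N ->
  pcongr p 2 (alpha_ratio (p * m + i))
    (alpha_ratio i * (1 + P * (2 * m%:R * ((i.*2.+1)%:R^-1 - (i.*2.+2)%:R^-1)))).
Proof.
move=> i_small; rewrite /pcongr.
have -> : alpha_ratio (p * m + i) -
            alpha_ratio i * (1 + P * (2 * m%:R * ((i.*2.+1)%:R^-1 - (i.*2.+2)%:R^-1))) =
          P ^+ 2 * (- m%:R ^+ 2 * (1 / 2) * i.+1%:R^-1 ^+ 2 * (p * m + i).+1%:R^-1).
  have Pm_ge0 : 0 <= P * m%:R :> rat by rewrite mulr_ge0 ?ler0n.
  have i_ge0 : 0 <= i%:R :> rat := ler0n _ _.
  rewrite /alpha_ratio -!natr1 !natrD !natrM -muln2 natrM; field.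
  by apply/and4P; split; apply: lt0r_neq0; lra.
have iZ : i.+1%:R^-1 \in pintegral p by apply: pintegralV_nat; rewrite ndvdn_lt //; lia.
have dZ : (p * m + i).+1%:R^-1 \in pintegral p.
  by apply: pintegralV_nat; rewrite -addnS ndvdn_mulD //; lia.
apply/pdvdq_exp/(rpredM _ dZ)/(rpredM _ (rpredX _ iZ))/(rpredM _ half_pintegral).
by rewrite rpredN rpredX ?rpred_nat.
Qed.

Lemma alternating_harmonic_pintegral t : (2 * t < p)%N ->
  \sum_(1 <= j < (2 * t).+1) (-1) ^+ j.-1 / j%:R \in pintegral p.
Proof.
move=> t_small; rewrite sum_alternating_harmonic; apply: rpred_sum => i _.
have := ltn_ord i => i_lt.
by apply: rpredB; apply: pintegralV_nat; rewrite ndvdn_lt //; lia.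
Qed.

Lemma prod_alpha_ratio_pcongr m t : (2 * t < p)%N ->
  pcongr p 2 (\prod_(i < t) alpha_ratio (p * m + i))
    (alpha t * (1 + 2 * P * m%:R * \sum_(1 <= j < (2 * t).+1) (-1) ^+ j.-1 / j%:R)).
Proof.
move=> t_small.
pose g i : rat := (i.*2.+1)%:R^-1 - (i.*2.+2)%:R^-1.
have gZ (i : 'I_t) : 2 * m%:R * g i \in pintegral p.
  have := ltn_ord i => i_lt; rewrite rpredM ?rpredM ?rpred_nat //.
  by apply: rpredB; apply: pintegralV_nat; rewrite ndvdn_lt //; lia.
apply: (pcongr_trans (y := \prod_(i < t) (alpha_ratio i * (1 + P * (2 * m%:R * g i))))).
  apply: pcongr_prod => i; have := ltn_ord i => i_lt; split.
  - by apply: alpha_ratio_pintegral; rewrite -addnS ndvdn_mulD //; lia.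
  - apply: rpredM (rpredD (rpred1 _) (rpredM (rpred_nat _ _) (gZ i))).
    by apply: alpha_ratio_pintegral; rewrite ndvdn_lt //; lia.
  - by apply: alpha_ratio_pcongr; lia.
have alpha_t : alpha t = \prod_(i < t) alpha_ratio i.
  by have := alphaD 0 t; rewrite alpha0 mul1r !add0n.
rewrite big_split /= -alpha_t; apply: pcongrM; rewrite ?alpha_pintegral ?pcongrxx //.
  by rewrite rpredD ?rpred1 ?rpredM ?rpred_nat ?alternating_harmonic_pintegral.
apply: pcongr_trans (pcongr_prod1D gZ) _.
by rewrite -mulr_sumr sum_alternating_harmonic !mulrA [P * 2]mulrC pcongrxx.
Qed.

Lemma alpha_pdvdq m t : (h < t < p)%N -> pdvdq p 1 (alpha (p * m + t)).
Proof.
move=> t_big; rewrite alphaD alpha_mulp; apply: pdvdq_mull (prod_alpha_ratio_pdvdq m t_big).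
by rewrite rpredM ?alpha_pintegral // rpred_prod // => k _; apply: block_ratio_pintegral.
Qed.

Lemma alpha_pcongr m t : (2 * t < p)%N ->
  pcongr p 2 (alpha (p * m + t))
    (alpha m * alpha t * (1 - gammap p * P * m%:R
       + 2 * P * m%:R * \sum_(1 <= j < (2 * t).+1) (-1) ^+ j.-1 / j%:R)).
Proof.
move=> t_small; set S := \sum_(1 <= j < _) _.
set X := 1 - gammap p * P * m%:R; set T := alpha t * (1 + 2 * P * m%:R * S).
have SZ : S \in pintegral p by apply: alternating_harmonic_pintegral.
have gZ := gammap_pintegral; have amZ := alpha_pintegral m; have atZ := alpha_pintegral t.
have XZ : X \in pintegral p.
  by rewrite /X -mulrA -natrM; exact: rpredB (rpred1 _) (rpredM gZ (rpred_nat _ _)).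
have TZ : T \in pintegral p.
  by rewrite /T -!natrM; exact: rpredM atZ (rpredD (rpred1 _) (rpredM (rpred_nat _ _) SZ)).
rewrite alphaD alpha_mulp -mulrA; apply: (pcongr_trans (y := alpha m * (X * T))).
  apply: pcongrM amZ (rpredM XZ TZ) (pcongrxx _ _) _.
  apply: pcongrM _ TZ (prod_block_ratio_pcongr m) (prod_alpha_ratio_pcongr m t_small).
  by apply: rpred_prod => k _; apply: block_ratio_pintegral.
rewrite /pcongr /X /T.
have -> : alpha m * ((1 - gammap p * P * m%:R) * (alpha t * (1 + 2 * P * m%:R * S))) -
          alpha m * alpha t * (1 - gammap p * P * m%:R + 2 * P * m%:R * S) =
          P ^+ 2 * (- 2 * alpha m * alpha t * gammap p * m%:R ^+ 2 * S) by ring.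
apply/pdvdq_exp/(rpredM _ SZ)/(rpredM _ (rpredX _ (rpred_nat _ _)))/(rpredM _ gZ).
by rewrite (rpredM _ atZ) // rpredM ?rpredN ?rpred_nat.
Qed.

End OddPrime.
End PIntegral.

Unset Implicit Arguments.

Theorem lemma2p5 (p r r' t : nat) :
  prime p -> odd p -> r = (p * r' + t)%N -> (t < p)%N ->
  ((p < 2 * t)%N -> pdvdq p 1 (alpha r)) /\
  ((2 * t < p)%N ->
     pcongr p 2 (alpha r)
       (alpha r' * alpha t *
        (1 - gammap p * p%:R * r'%:R
           + 2 * p%:R * r'%:R *
             \sum_(1 <= j < (2 * t).+1) ((-1) ^+ (j.-1) / j%:R)))).
Proof.
move=> p_prime p_odd -> t_lt_p; split=> [t_big | t_small].
  by apply: alpha_pdvdq => //; rewrite t_lt_p andbT; lia.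
exact: alpha_pcongr.
Qed.
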